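(* If $X$ is a discrete metric space with bounded geometry and finite APC-decomposition complexity, then $X$ has property A.
   Context: A discrete metric space $X$ has bounded geometry if for every $r>0$ there is $N_r$ with $|B(x,r)|<N_r$ for all $x\in X$. Such an $X$ has property A if for each $R,\varepsilon>0$ there is a map $\xi\colon X\to\ell^1(X)$ with $\|\xi_x\|_1=1$ for all $x$, $\|\xi_{x_1}-\xi_{x_2}\|_1\le\varepsilon$ whenever $d(x_1,x_2)\le R$, and some $S>0$ with $\operatorname{supp}\xi_x\subset\bar B(x,S)$ for all $x$. A family $\mathcal{U}$ of metric subspaces of $(X,d)$ is $r$-disjoint if $d(x,y)>r$ whenever $x\in U$, $y\in U'$, $U\neq U'$ in $\mathcal{U}$. For families $\mathcal{X},\mathcal{Y}$ and $R\in\mathbb{R}^{\mathbb{N}}$, $\mathcal{X}\xrightarrow{R}\mathcal{Y}$ means: there is an integer $k$ such that for each $X\in\mathcal{X}$ there are subcollections $\mathcal{U}_1,\dots,\mathcal{U}_k\subseteq\mathcal{Y}$ of subspaces of $X$, each $\mathcal{U}_i$ being $R_i$-disjoint, with $\bigcup_i\mathcal{U}_i$ covering $X$. A family is bounded if the diameters of its members are uniformly bounded. $\mathfrak{C}_0$ is the class of bounded families; for an ordinal $\alpha>0$, $\mathfrak{C}_\alpha$ is the class of families $\mathcal{X}$ such that for every $R\in\mathbb{R}^{\mathbb{N}}$ there exist $\beta<\alpha$ and $\mathcal{Y}\in\mathfrak{C}_\beta$ with $\mathcal{X}\xrightarrow{R}\mathcal{Y}$. A metric space has finite APC-decomposition complexity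 if it is a member of some family belonging to $\mathfrak{C}_\alpha$ for some ordinal $\alpha$. *)

From HB Require Import structures.
From mathcomp Require Import all_boot all_order all_algebra.
From mathcomp Require Import all_classical all_reals all_analysis.
From Stdlib Require Import List.
Set Implicit Arguments. Unset Strict Implicit. Unset Printing Implicit Defensive.
Import Order.TTheory GRing.Theory Num.Theory.
Local Open Scope classical_set_scope.
Local Open Scope ring_scope.

Section Defs.
Variables (R : realType) (T : choiceType) (d : T -> T -> R).

Definition is_metric : Prop :=
  [/\ (forall x y, 0 <= d x y),
      (forall x y, d x y = 0 <-> x = y),
      (forall x y, d x y = d y x) &
      (forall x y z, d x z <= d x y + d y z)].

Definition discrete_metric : Prop :=
  forall x, exists2 e : R, 0 < e & forall y, d x y < e -> y = x.

(* bounded geometry: for every r > 0 there is N_r with |B(x,r)| < N_r;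
   |B(x,r)| < N is expressed as: B(x,r) is covered by a list of length < N *)
Definition bounded_geometry : Prop :=
  forall r : R, 0 < r -> exists N : nat, forall x : T,
    exists s : list T, (length s < N)%N /\ (forall y, d x y < r -> In y s).

Definition l1norm (f : T -> R) : \bar R := \esum_(y in setT) (`|f y|)%:E.

Definition propertyA : Prop :=
  forall Rr eps : R, 0 < Rr -> 0 < eps ->
  exists xi : T -> T -> R,
    [/\ (forall x, l1norm (xi x) = 1%:E),
        (forall x1 x2, d x1 x2 <= Rr ->
            Order.le (l1norm (fun y => xi x1 y - xi x2 y)) eps%:E) &
        exists2 S : R, 0 < S & forall x y, xi x y != 0 -> d x y <= S].

Definition rdisjoint (r : R) (U : set (set T)) : Prop :=
  forall A B, U A -> U B -> A <> B -> forall x y, A x -> B y -> r < d x y.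

Definition bounded_family (F : set (set T)) : Prop :=
  exists D : R, forall A, F A -> forall x y, A x -> A y -> d x y <= D.

Definition decomposes (Rs : nat -> R) (X Y : set (set T)) : Prop :=
  exists k : nat, forall A, X A ->
    exists U : nat -> set (set T),
      (forall i, (1 <= i <= k)%N ->
         [/\ U i `<=` Y, (forall V, U i V -> V `<=` A) & rdisjoint (Rs i) (U i)])
      /\ A `<=` \bigcup_(i in [set i | (1 <= i <= k)%N]) \bigcup_(V in U i) V.

(* union over all ordinals alpha of the classes C_alpha: the height of a
   derivation tree plays the role of the ordinal alpha *)
Inductive finite_APC : set (set T) -> Prop :=
| APC_bounded F : bounded_family F -> finite_APC F
| APC_step F : (forall Rs : nat -> R, exists Y, finite_APC Y /\ decomposes Rs F Y) ->
               finite_APC F.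

Definition finite_APC_space : Prop := exists F, finite_APC F /\ F setT.

End Defs.

From mathcomp Require Import all_boot all_order all_algebra.
From mathcomp Require Import all_classical all_reals all_analysis.
From mathcomp Require Import ring lra.
Set Implicit Arguments. Unset Strict Implicit. Unset Printing Implicit Defensive.
Import Order.TTheory GRing.Theory Num.Theory.
Local Open Scope classical_set_scope.
Local Open Scope ring_scope.

(* Call a family of subspaces uniformly A if for all r, eps its members admit
   property-A maps (finitely supported probability vectors) with one common
   support radius S.  Bounded families are uniformly A: send every point of a
   member to the Dirac mass at one fixed point of it.  If X --R--> Y with Y
   uniformly A, let W_j be the union of the R_(j+1)-disjoint subfamily U_(j+1),
   take the partition of unity p_j subordinate to the s_j-neighbourhoods of the
   W_j, and glue: x is sent to the p_j(x)-weighted average of the maps of the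
   members of U_(j+1) near x.  With s_j = c 2^(j+1) the p_j vary by at most
   eps/2 in total between r-close points, and with R_(j+1) = 2 s_j + r two
   r-close points see the same member of U_(j+1).  Induction on the derivation
   of finite APC-decomposition complexity then gives property A for X itself. *)

Section FinitelySupported.
Variables (R : realType) (T : choiceType).

Lemma sumr_neq0_exists k (F : 'I_k -> R) :
  \sum_(j < k) F j != 0 -> exists j, F j != 0.
Proof.
apply: contraNP => noj; rewrite big1 // => j _.
by have [//|Fj] := eqVneq (F j) 0; case: noj; exists j.
Qed.

Lemma sum_support_eq (f : T -> R) (s t : seq T) : uniq s -> uniq t ->
  (forall y, f y != 0 -> y \in s) -> (forall y, f y != 0 -> y \in t) ->
  \sum_(y <- s) f y = \sum_(y <- t) f y.
Proof.
move=> us ut fs ft.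
have restrict (a b : seq T) : (forall y, f y != 0 -> y \in b) ->
    \sum_(y <- a) f y = \sum_(y <- [seq y <- a | y \in b]) f y.
  move=> fb; rewrite big_filter [RHS]big_mkcond; apply: eq_bigr => y _.
  by case: ifP => // yb; apply/eqP; apply: contraFT yb => /fb.
rewrite (restrict s t ft) (restrict t s fs); apply/perm_big/uniq_perm.
- exact: filter_uniq.
- exact: filter_uniq.
by move=> y; rewrite !mem_filter andbC.
Qed.

Lemma l1norm_seq (f : T -> R) (s : seq T) : uniq s ->
  (forall y, f y != 0 -> y \in s) -> l1norm f = (\sum_(y <- s) `|f y|)%:E.
Proof.
move=> us fs; rewrite /l1norm (esumID [set` s]); last by move=> y _; rewrite lee_fin.
rewrite [X in _ + X]esum1 ?adde0; last first.
  by move=> y [_ /= ys]; have [->|/fs] := eqVneq (f y) 0; rewrite ?normr0.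
rewrite setTI esum_fset; [|exact: finite_seq|by move=> y _; rewrite lee_fin].
by rewrite -fsbig_seq // sumEFin.
Qed.

Definition prob_vec (f : T -> R) (s : seq T) : Prop :=
  [/\ uniq s, forall y, f y != 0 -> y \in s, forall y, 0 <= f y
    & \sum_(y <- s) f y = 1].

Lemma prob_vec_widen f s t :
  prob_vec f s -> uniq t -> {subset s <= t} -> prob_vec f t.
Proof.
move=> [us fs f_ge0 f_sum1] ut st; have ft y (fy : f y != 0) := st _ (fs y fy).
by split=> //; rewrite -f_sum1 (sum_support_eq ut us).
Qed.

Lemma prob_vec_eq0 f s y : prob_vec f s -> y \notin s -> f y = 0.
Proof. by move=> [_ fs _ _] ys; apply/eqP; apply: contraNT ys => /fs. Qed.

Lemma l1norm_prob_vec f s : prob_vec f s -> l1norm f = 1%:E.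
Proof.
move=> [us fs f_ge0 f_sum1]; rewrite (l1norm_seq us fs) -f_sum1.
by congr _%:E; apply: eq_bigr => y _; rewrite ger0_norm.
Qed.

Lemma prob_vec_mix k (a : 'I_k -> R) (f : 'I_k -> T -> R) (s : 'I_k -> seq T) :
  (forall j, 0 <= a j) -> \sum_(j < k) a j = 1 ->
  (forall j, a j != 0 -> prob_vec (f j) (s j)) ->
  prob_vec (fun y => \sum_(j < k) a j * f j y)
           (undup (flatten [seq s j | j <- enum 'I_k])).
Proof.
move=> a_ge0 a_sum1 fP; set t := undup _.
have ut : uniq t by apply: undup_uniq.
have st j : {subset s j <= t}.
  by move=> y ys; rewrite mem_undup; apply/flatten_mapP; exists j; rewrite ?mem_enum.
have fPt j : a j != 0 -> prob_vec (f j) t.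
  by move=> aj; apply: prob_vec_widen (fP j aj) ut (st j).
split=> //.
- move=> y /sumr_neq0_exists [j]; rewrite mulf_eq0 negb_or => /andP[aj fj].
  by have [_ fs _ _] := fP j aj; apply/st/fs.
- move=> y; apply: sumr_ge0 => j _; have [->|aj] := eqVneq (a j) 0; first by rewrite mul0r.
  by have [_ _ f_ge0 _] := fP j aj; apply: mulr_ge0.
rewrite exchange_big -[RHS]a_sum1; apply: eq_bigr => j _; rewrite -mulr_sumr.
have [->|aj] := eqVneq (a j) 0; first by rewrite mul0r.
by have [_ _ _ ->] := fPt j aj; rewrite mulr1.
Qed.

Lemma sum_abs_scale_sub_le (s : seq T) (a b del : R) (f g : T -> R) :
  0 <= a -> 0 <= b -> 0 <= del ->
  (a != 0 -> prob_vec f s) -> (b != 0 -> prob_vec g s) ->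
  (a != 0 -> b != 0 -> \sum_(y <- s) `|f y - g y| <= del) ->
  \sum_(y <- s) `|a * f y - b * g y| <= `|a - b| + b * del.
Proof.
move=> a_ge0 b_ge0 del_ge0 fP gP fg.
have [->|a0] := eqVneq a 0.
  rewrite sub0r normrN ger0_norm //; have [->|b0] := eqVneq b 0.
    by rewrite big1 ?mul0r ?addr0 // => y _; rewrite !mul0r subrr normr0.
  have [_ _ g_ge0 g_sum1] := gP b0.
  under eq_bigr do rewrite mul0r sub0r normrN ger0_norm ?mulr_ge0 //.
  by rewrite -mulr_sumr g_sum1 mulr1 lerDl mulr_ge0.
have [_ _ f_ge0 f_sum1] := fP a0.
have [->|b0] := eqVneq b 0.
  under eq_bigr do rewrite mul0r subr0 ger0_norm ?mulr_ge0 //.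
  by rewrite -mulr_sumr f_sum1 mulr1 subr0 mul0r addr0 ger0_norm.
apply: le_trans (_ : \sum_(y <- s) (`|a - b| * f y + b * `|f y - g y|) <= _).
  apply: ler_sum => y _.
  have -> : a * f y - b * g y = (a - b) * f y + b * (f y - g y) by ring.
  apply: le_trans (ler_normD _ _) _.
  by rewrite !normrM (ger0_norm (f_ge0 y)) (ger0_norm b_ge0).
rewrite big_split /= -!mulr_sumr f_sum1 mulr1 lerD2l.
by apply: ler_wpM2l => //; apply: fg.
Qed.

Lemma l1norm_mix k (a b : 'I_k -> R) (f g : 'I_k -> T -> R)
    (sf sg : 'I_k -> seq T) (del : R) :
  0 <= del -> (forall j, 0 <= a j) -> (forall j, 0 <= b j) ->
  \sum_(j < k) b j = 1 ->
  (forall j, a j != 0 -> prob_vec (f j) (sf j)) ->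
  (forall j, b j != 0 -> prob_vec (g j) (sg j)) ->
  (forall j, a j != 0 -> b j != 0 -> (l1norm (fun y => f j y - g j y) <= del%:E)%O) ->
  (l1norm (fun y => \sum_(j < k) a j * f j y - \sum_(j < k) b j * g j y)
    <= (\sum_(j < k) `|a j - b j| + del)%:E)%O.
Proof.
move=> del_ge0 a_ge0 b_ge0 b_sum1 fP gP fg.
set t := undup (flatten [seq sf j | j <- enum 'I_k] ++ flatten [seq sg j | j <- enum 'I_k]).
have ut : uniq t by apply: undup_uniq.
have sft j : {subset sf j <= t}.
  move=> y ys; rewrite mem_undup mem_cat; apply/orP; left.
  by apply/flatten_mapP; exists j; rewrite ?mem_enum.
have sgt j : {subset sg j <= t}.
  move=> y ys; rewrite mem_undup mem_cat; apply/orP; right.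
  by apply/flatten_mapP; exists j; rewrite ?mem_enum.
have fPt j (aj : a j != 0) : prob_vec (f j) t := prob_vec_widen (fP j aj) ut (sft j).
have gPt j (bj : b j != 0) : prob_vec (g j) t := prob_vec_widen (gP j bj) ut (sgt j).
have scaled_eq0 (c : 'I_k -> R) h y j : (c j != 0 -> prob_vec (h j) t) ->
    y \notin t -> c j * h j y = 0.
  move=> hP yt; have [->|cj] := eqVneq (c j) 0; first by rewrite mul0r.
  by rewrite (prob_vec_eq0 (hP cj) yt) mulr0.
have mix_supp y :
    \sum_(j < k) a j * f j y - \sum_(j < k) b j * g j y != 0 -> y \in t.
  rewrite -sumrB => /sumr_neq0_exists [j]; apply: contraNT => yt.
  by rewrite (scaled_eq0 _ _ _ _ (fPt j) yt) (scaled_eq0 _ _ _ _ (gPt j) yt) subrr.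
rewrite (l1norm_seq ut mix_supp) lee_fin.
apply: le_trans (_ : \sum_(y <- t) \sum_(j < k) `|a j * f j y - b j * g j y| <= _).
  by apply: ler_sum => y _; rewrite -sumrB; apply: ler_norm_sum.
rewrite exchange_big /= -[X in _ + X]mul1r -b_sum1 mulr_suml -big_split /=.
apply: ler_sum => j _; apply: (sum_abs_scale_sub_le _ _ _ (fPt j) (gPt j)) => // aj bj.
have fg_supp y : f j y - g j y != 0 -> y \in t.
  apply: contraNT => yt.
  by rewrite (prob_vec_eq0 (fPt j aj) yt) (prob_vec_eq0 (gPt j bj) yt) subrr.
by rewrite -lee_fin -(l1norm_seq ut fg_supp); apply: fg.
Qed.

End FinitelySupported.

Section Normalization.
Variable R : realType.

Lemma sum_abs_normalize_sub_le k (F1 F2 : 'I_k -> R) :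
  (forall j, 0 <= F2 j) -> 0 < \sum_(i < k) F1 i -> 0 < \sum_(i < k) F2 i ->
  \sum_(j < k) `|F1 j / \sum_(i < k) F1 i - F2 j / \sum_(i < k) F2 i|
    <= 2 * (\sum_(j < k) `|F1 j - F2 j|) / \sum_(i < k) F1 i.
Proof.
move=> F2_ge0; set G1 := \sum_(i < k) F1 i; set G2 := \sum_(i < k) F2 i => G1_gt0 G2_gt0.
have [G1_neq0 G2_neq0] : G1 != 0 /\ G2 != 0 by split; apply: lt0r_neq0.
have termwise j : `|F1 j / G1 - F2 j / G2|
    <= `|F1 j - F2 j| / G1 + F2 j * `|G2 - G1| / (G1 * G2).
  have -> : F1 j / G1 - F2 j / G2 = (F1 j - F2 j) / G1 + F2 j * (G2 - G1) / (G1 * G2).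
    by field; rewrite G1_neq0 G2_neq0.
  apply: le_trans (ler_normD _ _) _.
  by rewrite !(normrM, normfV) (gtr0_norm G1_gt0) (gtr0_norm G2_gt0) (ger0_norm (F2_ge0 j)).
have dG : `|G2 - G1| <= \sum_(j < k) `|F1 j - F2 j|.
  rewrite /G1 /G2 -sumrB; apply: le_trans (ler_norm_sum _ _ _) _.
  by apply: ler_sum => j _; rewrite distrC.
apply: le_trans (ler_sum _ (fun j _ => termwise j)) _.
rewrite big_split /= -!mulr_suml -/G2.
have -> : G2 * `|G2 - G1| / (G1 * G2) = `|G2 - G1| / G1 by field; rewrite G1_neq0 G2_neq0.
by rewrite -mulrDl ler_pM2r ?invr_gt0 // mulr2n mulrDl mul1r lerD2l.
Qed.

Lemma sum_inv_pow2 k : \sum_(j < k) (2 ^+ j.+1)^-1 = 1 - (2 ^+ k)^-1 :> R.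
Proof.
elim: k => [|k IH]; first by rewrite big_ord0 expr0 invr1 subrr.
by rewrite big_ord_recr /= IH exprS invfM; field.
Qed.

Lemma sum_div_pow2_le k (a : R) : 0 <= a -> \sum_(j < k) a / 2 ^+ j.+1 <= a.
Proof.
by move=> a_ge0; rewrite -mulr_sumr sum_inv_pow2 ler_piMr // lerBlDr lerDl.
Qed.

End Normalization.

Section UniformPropertyA.
Variables (R : realType) (T : choiceType) (d : T -> T -> R).

Definition propA_witness (r eps S : R) (A : set T)
    (xi : T -> T -> R) (sp : T -> seq T) : Prop :=
  [/\ forall x, A x -> prob_vec (xi x) (sp x),
      forall x y, A x -> xi x y != 0 -> d x y <= S
    & forall x1 x2, A x1 -> A x2 -> d x1 x2 <= r ->
        (l1norm (fun y => xi x1 y - xi x2 y) <= eps%:E)%O].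

Definition uniform_propA (F : set (set T)) : Prop :=
  forall r eps : R, 0 < r -> 0 < eps -> exists2 S : R, 0 < S &
    forall A, F A -> exists xi sp, propA_witness r eps S A xi sp.

Lemma propA_witness_le r r' eps eps' S S' A xi sp :
  r' <= r -> eps <= eps' -> S <= S' ->
  propA_witness r eps S A xi sp -> propA_witness r' eps' S' A xi sp.
Proof.
move=> r'r epseps' SS' [P supp close]; split=> // [x y Ax xy|x1 x2 Ax1 Ax2 dx].
  exact: le_trans (supp x y Ax xy) SS'.
by rewrite (le_trans (close x1 x2 Ax1 Ax2 (le_trans dx r'r))) ?lee_fin.
Qed.

Lemma uniform_propA_skolem F : uniform_propA F ->
  exists (S : R -> R -> R) (xi : R -> R -> set T -> T -> T -> R)
         (sp : R -> R -> set T -> T -> seq T),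
  forall r eps, 0 < r -> 0 < eps -> 0 < S r eps /\
    forall A, F A -> propA_witness r eps (S r eps) A (xi r eps A) (sp r eps A).
Proof.
move=> FA.
have witness_at (reps : R * R) : exists w : R * (set T -> T -> T -> R) * (set T -> T -> seq T),
    0 < reps.1 -> 0 < reps.2 -> 0 < w.1.1 /\
    forall A, F A -> propA_witness reps.1 reps.2 w.1.1 A (w.1.2 A) (w.2 A).
  have [[r_gt0 eps_gt0]|] := pselect (0 < reps.1 /\ 0 < reps.2); last first.
    by move=> npos; exists (1, fun _ _ _ => 0, fun _ _ => [::]) => r0 e0; case: npos.
  have [S S_gt0 wA] := FA _ _ r_gt0 eps_gt0.
  have /choice [xsp xspP] : forall A, exists xs : (T -> T -> R) * (T -> seq T),
      F A -> propA_witness reps.1 reps.2 S A xs.1 xs.2.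
    move=> A; have [FA'|nFA] := pselect (F A); last by exists (fun _ _ => 0, fun _ => [::]).
    by have [xi [sp w]] := wA A FA'; exists (xi, sp).
  by exists (S, fun A => (xsp A).1, fun A => (xsp A).2).
have [w wP] := choice witness_at.
exists (fun r eps => (w (r, eps)).1.1), (fun r eps => (w (r, eps)).1.2).
by exists (fun r eps => (w (r, eps)).2) => r eps r0 e0; apply: (wP (r, eps)).
Qed.

Lemma bounded_uniform_propA F : bounded_family d F -> uniform_propA F.
Proof.
move=> [D diamF] r eps _ eps_gt0; exists (1 + `|D|); first by rewrite ltr_pwDl.
move=> A FA; have [[b Ab]|A0] := pselect (exists b, A b); last first.
  exists (fun _ _ => 0), (fun _ => [::]).
  by split=> [x Ax|x y Ax|x1 x2 Ax1]; case: A0; exists x1 || exists x.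
exists (fun _ y => (y == b)%:R), (fun _ => [:: b]); split.
- move=> x _; split=> //; last by rewrite big_seq1 eqxx.
  by move=> y; rewrite mem_seq1; case: (y == b); rewrite ?eqxx.
- move=> x y Ax; have [-> _|] := eqVneq y b; last by rewrite eqxx.
  apply: le_trans (diamF A FA x b Ax Ab) _.
  by apply: le_trans (ler_norm D) _; rewrite lerDr.
- move=> x1 x2 _ _ _; rewrite (@l1norm_seq _ _ _ [::]) //.
    by rewrite big_nil lee_fin ltW.
  by move=> y; rewrite subrr eqxx.
Qed.

Lemma uniform_propA_propertyA F : uniform_propA F -> F setT -> propertyA d.
Proof.
move=> FA FT r eps r_gt0 eps_gt0.
have [S S_gt0 /(_ _ FT) [xi [sp [P supp close]]]] := FA r eps r_gt0 eps_gt0.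
exists xi; split=> [x|x1 x2|]; first exact: l1norm_prob_vec (P x I).
  exact: close.
by exists S => // x y; apply: supp.
Qed.

End UniformPropertyA.

Section Bump.
Variables (R : realType) (T : choiceType) (d : T -> T -> R).
Hypothesis d_metric : is_metric d.

Lemma is_metric_ge0 x y : 0 <= d x y. Proof. by case: d_metric. Qed.
Lemma is_metric_xx x : d x x = 0. Proof. by case: d_metric => _ dP _ _; apply/dP. Qed.
Lemma is_metric_sym x y : d x y = d y x. Proof. by case: d_metric. Qed.
Lemma is_metric_triangle x y z : d x z <= d x y + d y z. Proof. by case: d_metric. Qed.

(* [bump W s x = max(0, 1 - dist(x, W) / s)] *)
Definition bump (W : set T) (s : R) (x : T) : R :=
  sup [set t | t = 0 \/ exists2 v, W v & t = 1 - d x v / s].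

Section BumpTheory.
Variables (W : set T) (s : R).
Hypothesis s_gt0 : 0 < s.

Let bump_le x t : (t = 0 \/ exists2 v, W v & t = 1 - d x v / s) -> t <= bump W s x.
Proof.
apply: ub_le_sup; exists 1 => _ [->|[v _ ->]] //.
by rewrite lerBlDr lerDl divr_ge0 ?is_metric_ge0 ?ltW.
Qed.

Lemma bump_ge0 x : 0 <= bump W s x.
Proof. by apply: bump_le; left. Qed.

Lemma bump_ge1 x : W x -> 1 <= bump W s x.
Proof. by move=> Wx; apply: bump_le; right; exists x; rewrite ?is_metric_xx ?mul0r ?subr0. Qed.

Lemma bump_leD x y : bump W s x <= bump W s y + d x y / s.
Proof.
apply: ge_sup; first by exists 0; left.
move=> _ [->|[v Wv ->]]; first by rewrite addr_ge0 ?bump_ge0 ?divr_ge0 ?is_metric_ge0 ?ltW.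
have yv : 1 - d y v / s <= bump W s y by apply: bump_le; right; exists v.
apply: le_trans (lerD yv (lexx _)).
have tri : d y v / s <= d x v / s + d x y / s.
  by rewrite -mulrDl ler_pM2r ?invr_gt0 // addrC (is_metric_sym x y) is_metric_triangle.
lra.
Qed.

Lemma bump_dist x y : `|bump W s x - bump W s y| <= d x y / s.
Proof.
have := bump_leD x y; have := bump_leD y x; rewrite is_metric_sym ler_norml.
lra.
Qed.

Lemma bump_gt0_near x : 0 < bump W s x -> exists2 v, W v & d x v < s.
Proof.
apply: contraPP => far; apply/negP; rewrite -leNgt; apply: ge_sup; first by exists 0; left.
move=> _ [->//|[v Wv ->]]; rewrite subr_le0 ler_pdivlMr // mul1r leNgt.
by apply/negP => dv; apply: far; exists v.
Qed.

End BumpTheory.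

Section PartitionOfUnity.
Variables (k : nat) (W : 'I_k -> set T) (s : 'I_k -> R).
Hypothesis s_gt0 : forall j, 0 < s j.

Definition pou j x := bump (W j) (s j) x / \sum_(i < k) bump (W i) (s i) x.

Let bump_sum_ge1 x : (exists j, W j x) -> 1 <= \sum_(i < k) bump (W i) (s i) x.
Proof.
move=> [j Wjx]; apply: le_trans (bump_ge1 (s_gt0 j) Wjx) _.
by rewrite (bigD1 j) //= lerDl sumr_ge0 // => i _; apply: bump_ge0.
Qed.

Lemma pou_ge0 j x : 0 <= pou j x.
Proof. by rewrite divr_ge0 ?sumr_ge0 // => *; apply: bump_ge0. Qed.

Lemma pou_sum1 x : (exists j, W j x) -> \sum_(j < k) pou j x = 1.
Proof.
move=> /bump_sum_ge1 ge1; rewrite -mulr_suml divff //.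
by rewrite gt_eqF // (lt_le_trans ltr01).
Qed.

Lemma pou_neq0_near j x : pou j x != 0 -> exists2 v, W j v & d x v < s j.
Proof.
move=> pjx; apply: (bump_gt0_near (s_gt0 j)).
rewrite lt_def (bump_ge0 _ (s_gt0 j)) andbT eq_sym.
by apply: contraNneq pjx; rewrite /pou => <-; rewrite mul0r.
Qed.

Lemma pou_lipschitz x1 x2 : (exists j, W j x1) -> (exists j, W j x2) ->
  \sum_(j < k) `|pou j x1 - pou j x2| <= 2 * \sum_(j < k) d x1 x2 / s j.
Proof.
move=> /bump_sum_ge1 ge1 /bump_sum_ge1 ge1'.
apply: le_trans (sum_abs_normalize_sub_le _ _ _) _.
- by move=> j; apply: bump_ge0.
- exact: lt_le_trans ltr01 ge1.
- exact: lt_le_trans ltr01 ge1'.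
rewrite -mulrA ler_pM2l // ler_pdivrMr ?(lt_le_trans ltr01) //.
apply: le_trans (_ : _ <= \sum_(j < k) d x1 x2 / s j) _.
  by apply: ler_sum => j _; apply: bump_dist.
by rewrite ler_peMr // sumr_ge0 // => j _; rewrite divr_ge0 ?is_metric_ge0 ?ltW.
Qed.

End PartitionOfUnity.
End Bump.

Section Gluing.
Variables (R : realType) (T : choiceType) (d : T -> T -> R).
Hypothesis d_metric : is_metric d.
Variables (k : nat) (Y : set (set T)) (U : 'I_k -> set (set T)) (A : set T).
Variables (r del : R) (s S : 'I_k -> R).
Variables (e : 'I_k -> set T -> T -> T -> R) (sp : 'I_k -> set T -> T -> seq T).
Hypotheses (s_gt0 : forall j, 0 < s j) (S_ge0 : forall j, 0 <= S j) (del_ge0 : 0 <= del).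
Hypotheses (U_sub : forall j, U j `<=` Y)
           (U_disj : forall j, rdisjoint d (2 * s j + r) (U j))
           (U_cover : A `<=` \bigcup_j \bigcup_(V in U j) V).
Hypothesis e_wit : forall j V, Y V ->
  propA_witness d (2 * s j + r) del (S j) V (e j V) (sp j V).

Let p j x := pou d (fun j => \bigcup_(V in U j) V) s j x.

Let covered x : A x -> exists j, (\bigcup_(V in U j) V) x.
Proof. by move=> /U_cover [j _ Wx]; exists j. Qed.

(* The junk value [(x, set0)] is only taken where [p j x = 0], see [anchorP]. *)
Definition anchor j x : T * set T :=
  if pselect (exists vV : T * set T, [/\ U j vV.2, vV.2 vV.1 & d x vV.1 < s j])
  is left h then projT1 (cid h) else (x, set0).

Lemma anchorP j x : p j x != 0 ->
  [/\ U j (anchor j x).2, (anchor j x).2 (anchor j x).1 & d x (anchor j x).1 < s j].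
Proof.
rewrite /anchor; case: pselect => [h _|none]; first exact: projT2 (cid h).
by move=> /(pou_neq0_near d_metric s_gt0) [v [V UV Vv] dv]; case: none; exists (v, V).
Qed.

Let f j x := e j (anchor j x).2 (anchor j x).1.
Let sf j x := sp j (anchor j x).2 (anchor j x).1.

Let anchor_prob_vec j x : p j x != 0 -> prob_vec (f j x) (sf j x).
Proof.
by move=> /anchorP [UV Vv _]; have [P _ _] := @e_wit j _ (U_sub UV); exact: P Vv.
Qed.

Lemma anchor_dist j x1 x2 : d x1 x2 <= r -> p j x1 != 0 -> p j x2 != 0 ->
  d (anchor j x1).1 (anchor j x2).1 <= 2 * s j + r.
Proof.
move=> dx /anchorP [_ _ d1] /anchorP [_ _ d2].
have t1 := is_metric_triangle d_metric (anchor j x1).1 x1 (anchor j x2).1.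
have t2 := is_metric_triangle d_metric x1 x2 (anchor j x2).1.
rewrite (is_metric_sym d_metric _ x1) in t1; lra.
Qed.

Lemma anchor_same j x1 x2 : d x1 x2 <= r -> p j x1 != 0 -> p j x2 != 0 ->
  (anchor j x1).2 = (anchor j x2).2.
Proof.
move=> dx p1 p2; have [//|neq] := pselect ((anchor j x1).2 = (anchor j x2).2).
have [U1 V1 _] := anchorP p1; have [U2 V2 _] := anchorP p2.
have := U_disj U1 U2 neq V1 V2.
by rewrite ltNge anchor_dist.
Qed.

Definition glued x y := \sum_(j < k) p j x * f j x y.
Definition glued_supp x := undup (flatten [seq sf j x | j <- enum 'I_k]).

Lemma glued_prob_vec x : A x -> prob_vec (glued x) (glued_supp x).
Proof.
move=> Ax; apply: (@prob_vec_mix _ _ _ (p ^~ x) (f ^~ x) (sf ^~ x)).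
- by move=> j; apply: pou_ge0.
- exact: pou_sum1 (covered Ax).
- by move=> j; apply: anchor_prob_vec.
Qed.

Lemma glued_supp_le x y : A x -> glued x y != 0 -> d x y <= \sum_(j < k) (s j + S j).
Proof.
move=> Ax /sumr_neq0_exists [j]; rewrite mulf_eq0 negb_or => /andP[pj fj].
have [UV Vv dv] := anchorP pj; have [_ supp _] := @e_wit j _ (U_sub UV).
apply: le_trans (is_metric_triangle d_metric x (anchor j x).1 y) _.
rewrite (bigD1 j) //=; apply: le_trans (lerD (ltW dv) (supp _ _ Vv fj)) _.
rewrite lerDl sumr_ge0 // => i _.
exact: addr_ge0 (ltW (s_gt0 i)) (S_ge0 i).
Qed.

Lemma glued_close x1 x2 : A x1 -> A x2 -> d x1 x2 <= r ->
  (l1norm (fun y => glued x1 y - glued x2 y)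
     <= (2 * \sum_(j < k) r / s j + del)%:E)%O.
Proof.
move=> Ax1 Ax2 dx.
have same_witness j : p j x1 != 0 -> p j x2 != 0 ->
    (l1norm (fun y => f j x1 y - f j x2 y) <= del%:E)%O.
  move=> p1 p2; have [U1 V1 _] := anchorP p1; have [_ V2 _] := anchorP p2.
  have [_ _ close] := @e_wit j _ (U_sub U1).
  rewrite /f -(anchor_same dx p1 p2); apply: close => //.
    by rewrite (anchor_same dx p1 p2).
  exact: anchor_dist.
have pou_dist : \sum_(j < k) `|p j x1 - p j x2| <= 2 * \sum_(j < k) r / s j.
  apply: le_trans (pou_lipschitz d_metric s_gt0 (covered Ax1) (covered Ax2)) _.
  by rewrite ler_pM2l // ler_sum // => j _; rewrite ler_pM2r ?invr_gt0.
apply: le_trans (@l1norm_mix _ _ k (p ^~ x1) (p ^~ x2) (f ^~ x1) (f ^~ x2)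
  (sf ^~ x1) (sf ^~ x2) del del_ge0 _ _ _ (@anchor_prob_vec ^~ x1)
  (@anchor_prob_vec ^~ x2) same_witness) _.
- by move=> j; apply: pou_ge0.
- by move=> j; apply: pou_ge0.
- exact: pou_sum1 (covered Ax2).
by rewrite lee_fin lerD2r.
Qed.

Lemma glued_propA_witness : exists xi sp',
  propA_witness d r (2 * \sum_(j < k) r / s j + del) (\sum_(j < k) (s j + S j)) A xi sp'.
Proof.
exists glued, glued_supp; split; [exact: glued_prob_vec | exact: glued_supp_le |].
exact: glued_close.
Qed.

End Gluing.

Section Decomposition.
Variables (R : realType) (T : choiceType) (d : T -> T -> R).
Hypothesis d_metric : is_metric d.

Lemma decomposesP (Rs : nat -> R) (F Y : set (set T)) : decomposes d Rs F Y ->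
  exists k, forall A, F A -> exists U : 'I_k -> set (set T),
    [/\ forall j, U j `<=` Y, forall j : 'I_k, rdisjoint d (Rs j.+1) (U j)
      & A `<=` \bigcup_j \bigcup_(V in U j) V].
Proof.
move=> [k dec]; exists k => A /dec [U [UP cover]].
exists (fun j : 'I_k => U j.+1); split.
- by move=> j; have [] := UP j.+1 (ltn_ord j).
- by move=> j; have [] := UP j.+1 (ltn_ord j).
move=> x /cover [[|j] /= jk [V UV Vx]] //.
by exists (Ordinal jk) => //; exists V.
Qed.

Lemma decomposes_uniform_propA F :
  (forall Rs, exists Y, uniform_propA d Y /\ decomposes d Rs F Y) ->
  uniform_propA d F.
Proof.
move=> dec r eps r_gt0 eps_gt0.
pose c := 4 * r / eps; have c_gt0 : 0 < c by rewrite divr_gt0 ?mulr_gt0.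
pose s (j : nat) := c * 2 ^+ j.+1.
have s_gt0 j : 0 < s j by rewrite mulr_gt0 ?exprn_gt0.
have [Y [/uniform_propA_skolem [S [e [sp YA]]] /decomposesP [k UP]]] :=
  dec (fun i => 2 * (c * 2 ^+ i) + r).
have eps2_gt0 : 0 < eps / 2 by rewrite divr_gt0.
have Rs_gt0 j : 0 < 2 * s j + r by apply: addr_gt0 (mulr_gt0 _ (s_gt0 j)) r_gt0.
have YA' j := YA (2 * s j + r) (eps / 2) (Rs_gt0 j) eps2_gt0.
pose Sj (j : 'I_k) := S (2 * s j + r) (eps / 2).
have Sj_ge0 j : 0 <= Sj j by rewrite ltW // (YA' j).1.
have sum_ge0 : 0 <= \sum_(j < k) (s j + Sj j).
  by apply: sumr_ge0 => j _; apply: addr_ge0 (ltW (s_gt0 j)) (Sj_ge0 j).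
exists (1 + \sum_(j < k) (s j + Sj j)); first by rewrite ltr_pwDl.
move=> A /UP [U [U_sub U_disj U_cover]].
have [xi [sp' wit]] := glued_propA_witness d_metric (fun j => s_gt0 j) Sj_ge0 (ltW eps2_gt0)
  U_sub U_disj U_cover (fun j => (YA' j).2).
exists xi, sp'; apply: propA_witness_le wit => //; last by rewrite lerDr.
have -> : \sum_(j < k) r / s j = \sum_(j < k) eps / 4 / 2 ^+ j.+1.
  by apply: eq_bigr => j _; rewrite /s /c; field; rewrite !gt_eqF ?exprn_gt0.
have := sum_div_pow2_le k (ltW (divr_gt0 eps_gt0 (ltr0Sn _ 3))); lra.
Qed.

Lemma finite_APC_uniform_propA F : finite_APC d F -> uniform_propA d F.
Proof.
move: F; fix IH 2 => F; case=> [{}F /bounded_uniform_propA //|{}F dec].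
apply: decomposes_uniform_propA => Rs; case: (dec Rs) => Y [FY FdY].
by exists Y; split=> //; apply: IH.
Qed.

End Decomposition.

Theorem theorem5p8 (R : realType) (T : choiceType) (d : T -> T -> R) :
  is_metric d -> discrete_metric d -> bounded_geometry d ->
  finite_APC_space d -> propertyA d.
Proof.
move=> d_metric _ _ [F [/(finite_APC_uniform_propA d_metric) FA FT]].
exact: uniform_propA_propertyA FA FT.
Qed.
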